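(* Let $s\in\{+1,-1\}$ and let $q\ge1$ be an integer. Let $f:\mathbb Z_{2q+1}\to\mathbb R$ be nonzero and even, with $sf(0)\le0$ and $\widehat f(0)\le0$. Then $$\#\{n\in\mathbb Z_{2q+1}: f(n)<0\}\cdot\#\{k\in\mathbb Z_{2q+1}: s\widehat f(k)<0\}\ \ge\ \frac{2q+1}{16}.$$
   Context: $\mathbb Z_{2q+1}$ is the group of integers modulo $2q+1$, with representatives $\{-q,\dots,q\}$. The discrete Fourier transform is $\widehat f(k)=\frac{1}{\sqrt{2q+1}}\sum_{n=-q}^qf(n)e^{-2\pi ikn/(2q+1)}$; for even real $f$ it is real and even. *)

From Stdlib Require Import Reals Lra Lia ZArith List.
Open Scope R_scope.

(* Representatives {-q,...,q} of Z_{2q+1}. *)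
Definition zrange (q : nat) : list Z :=
  map (fun i => (Z.of_nat i - Z.of_nat q)%Z) (seq 0 (2 * q + 1)).

Definition sumZ (q : nat) (g : Z -> R) : R :=
  fold_right (fun n acc => g n + acc) 0 (zrange q).

Definition Nmod (q : nat) : R := INR (2 * q + 1).

(* DFT  fhat(k) = 1/sqrt(2q+1) * sum_n f(n) e^{-2 pi i k n/(2q+1)},
   split into real and imaginary parts (f is real-valued). *)
Definition dft_re (q : nat) (f : Z -> R) (k : Z) : R :=
  / sqrt (Nmod q) * sumZ q (fun n => f n * cos (2 * PI * IZR k * IZR n / Nmod q)).

Definition dft_im (q : nat) (f : Z -> R) (k : Z) : R :=
  - (/ sqrt (Nmod q) * sumZ q (fun n => f n * sin (2 * PI * IZR k * IZR n / Nmod q))).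

Definition count_neg (q : nat) (g : Z -> R) : nat :=
  length (filter (fun n => if Rlt_dec (g n) 0 then true else false) (zrange q)).

Definition in_range (q : nat) (n : Z) : Prop :=
  (- Z.of_nat q <= n <= Z.of_nat q)%Z.

(* Write N = 2q+1, F for the cosine transform of f, and |g|_1, |g|_oo for the
   sum and the maximum of |g| over Z_N.  Since F is real and f is even, f is
   recovered from F by the same cosine transform, so both |F|_oo <= |f|_1 / sqrt N
   and |f|_oo <= |F|_1 / sqrt N.  The sign conditions say exactly that
   sum f = sqrt N F(0) <= 0 and sum s F = sqrt N s f(0) <= 0, and a function with
   nonpositive sum has |g|_1 <= 2 #{g < 0} |g|_oo.  Chaining the four bounds gives
   |f|_1 <= (4 / N) #{f < 0} #{s F < 0} |f|_1, i.e. the product of the counts is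
   at least N / 4. *)

From Stdlib Require Import Reals ZArith List Lra Lia.
Open Scope R_scope.

Section ListSums.

Context {A : Type}.

Definition lsum (l : list A) (g : A -> R) : R :=
  fold_right (fun x acc => g x + acc) 0 l.

Definition count_negl (l : list A) (g : A -> R) : nat :=
  length (filter (fun x => if Rlt_dec (g x) 0 then true else false) l).

Lemma lsum_cons a l g : lsum (a :: l) g = g a + lsum l g.
Proof. reflexivity. Qed.

Lemma lsum_ext l g h : (forall x, In x l -> g x = h x) -> lsum l g = lsum l h.
Proof.
  induction l as [|a l IH]; intros H; simpl; [reflexivity|].
  rewrite H, IH by (simpl; auto; intros; apply H; simpl; auto); reflexivity.
Qed.

Lemma lsum_plus l g h : lsum l (fun x => g x + h x) = lsum l g + lsum l h.
Proof. induction l as [|a l IH]; simpl; [lra|]. rewrite IH; ring. Qed.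

Lemma lsum_scal l c g : lsum l (fun x => c * g x) = c * lsum l g.
Proof. induction l as [|a l IH]; simpl; [lra|]. rewrite IH; ring. Qed.

Lemma lsum_le l g h : (forall x, In x l -> g x <= h x) -> lsum l g <= lsum l h.
Proof.
  induction l as [|a l IH]; intros H; simpl; [lra|].
  assert (g a <= h a) by (apply H; simpl; auto).
  assert (lsum l g <= lsum l h) by (apply IH; intros; apply H; simpl; auto).
  lra.
Qed.

Lemma lsum_zero l g : (forall x, In x l -> g x = 0) -> lsum l g = 0.
Proof.
  intros H. transitivity (lsum l (fun _ => 0)); [now apply lsum_ext|].
  clear H. induction l as [|a l IH]; [reflexivity|]. rewrite lsum_cons, IH; ring.
Qed.

Lemma lsum_const1 l : lsum l (fun _ => 1) = INR (length l).
Proof.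
  induction l as [|a l IH]; [reflexivity|].
  rewrite lsum_cons, IH. simpl length. rewrite S_INR. ring.
Qed.

Lemma Rabs_lsum_le l g : Rabs (lsum l g) <= lsum l (fun x => Rabs (g x)).
Proof.
  induction l as [|a l IH]; simpl; [rewrite Rabs_R0; lra|].
  eapply Rle_trans; [apply Rabs_triang|]. lra.
Qed.

Lemma lsum_nonneg l g : (forall x, In x l -> 0 <= g x) -> 0 <= lsum l g.
Proof.
  intros H. rewrite <- (lsum_zero l (fun _ => 0)) by auto. now apply lsum_le.
Qed.

Lemma le_lsum_of_In l a g :
  In a l -> (forall x, In x l -> 0 <= g x) -> g a <= lsum l g.
Proof.
  intros Ha Hpos. induction l as [|b l IH]; [destruct Ha|].
  rewrite lsum_cons.
  assert (0 <= lsum l g) by (apply lsum_nonneg; intros; apply Hpos; simpl; auto).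
  assert (0 <= g b) by (apply Hpos; simpl; auto).
  destruct Ha as [->|Ha]; [lra|].
  assert (g a <= lsum l g) by (apply IH; auto; intros; apply Hpos; simpl; auto).
  lra.
Qed.

Lemma lsum_delta l a g :
  NoDup l -> In a l -> (forall x, In x l -> x <> a -> g x = 0) -> lsum l g = g a.
Proof.
  induction l as [|b l IH]; intros Hnd Ha H; [destruct Ha|].
  inversion Hnd as [|? ? Hb Hnd']; subst. rewrite lsum_cons.
  destruct Ha as [->|Ha].
  - rewrite lsum_zero; [ring|]. intros x Hx. apply H; [simpl; auto|].
    intros ->; contradiction.
  - assert (b <> a) by (intros ->; contradiction).
    rewrite H, IH; simpl; auto; [ring|].
    intros x Hx; apply H; simpl; auto.
Qed.

Lemma lsum_Rabs_le_count_negl l g B :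
  lsum l g <= 0 -> (forall x, In x l -> Rabs (g x) <= B) ->
  lsum l (fun x => Rabs (g x)) <= 2 * INR (count_negl l g) * B.
Proof.
  intros Hsum Hb.
  enough (lsum l (fun x => Rabs (g x)) <= lsum l g + 2 * INR (count_negl l g) * B)
    by lra.
  clear Hsum. unfold count_negl. induction l as [|a l IH]; simpl; [lra|].
  assert (Ha : Rabs (g a) <= B) by (apply Hb; simpl; auto).
  specialize (IH (fun x Hx => Hb x (or_intror Hx))).
  destruct (Rlt_dec (g a) 0) as [Hneg|Hneg].
  - simpl length. rewrite S_INR. rewrite Rabs_left in * by auto. lra.
  - rewrite Rabs_right in * by lra. lra.
Qed.

End ListSums.

Lemma lsum_swap {A B : Type} (l1 : list A) (l2 : list B) (F : A -> B -> R) :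
  lsum l1 (fun a => lsum l2 (F a)) = lsum l2 (fun b => lsum l1 (fun a => F a b)).
Proof.
  induction l1 as [|a l1 IH]; simpl.
  - symmetry. now apply lsum_zero.
  - rewrite IH. symmetry. apply lsum_plus.
Qed.

Lemma Rabs_lsum_mul_cos_le {A : Type} (l : list A) (g : A -> R) (t : A -> R) :
  Rabs (lsum l (fun x => g x * cos (t x))) <= lsum l (fun x => Rabs (g x)).
Proof.
  eapply Rle_trans; [apply Rabs_lsum_le|]. apply lsum_le. intros x _.
  rewrite Rabs_mult.
  assert (Rabs (cos (t x)) <= 1) by apply Rabs_le, COS_bound.
  assert (0 <= Rabs (g x)) by apply Rabs_pos.
  nra.
Qed.

Lemma zrange_length q : length (zrange q) = (2 * q + 1)%nat.
Proof. unfold zrange. now rewrite length_map, length_seq. Qed.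

Lemma In_zrange q n : In n (zrange q) <-> in_range q n.
Proof.
  unfold zrange, in_range. rewrite in_map_iff. split.
  - intros [i [<- Hi]]. apply in_seq in Hi. lia.
  - intros H. exists (Z.to_nat (n + Z.of_nat q)). rewrite in_seq. lia.
Qed.

Lemma NoDup_zrange q : NoDup (zrange q).
Proof.
  apply NoDup_map_NoDup_ForallPairs; [|apply seq_NoDup].
  intros a b _ _ H. lia.
Qed.

Lemma Nmod_pos q : 0 < Nmod q.
Proof. unfold Nmod. apply lt_0_INR. lia. Qed.

Lemma sqrt_Nmod_pos q : 0 < sqrt (Nmod q).
Proof. apply sqrt_lt_R0, Nmod_pos. Qed.

Lemma Nmod_IZR q : Nmod q = IZR (2 * Z.of_nat q + 1).
Proof. unfold Nmod. rewrite INR_IZR_INZ. f_equal. lia. Qed.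

(* 2 sin(x/2) cos(kx) = sin((k + 1/2) x) - sin((k - 1/2) x) makes the sum telescope. *)
Lemma lsum_seq_cos_telescope q x st m :
  lsum (map (fun i => (Z.of_nat i - Z.of_nat q)%Z) (seq st m))
       (fun k => 2 * sin (x / 2) * cos (IZR k * x))
  = sin ((INR (st + m) - INR q - / 2) * x) - sin ((INR st - INR q - / 2) * x).
Proof.
  revert st; induction m as [|m IH]; intros st.
  - rewrite Nat.add_0_r. simpl. ring.
  - simpl seq. simpl map. rewrite lsum_cons, IH, minus_IZR, <- !INR_IZR_INZ.
    replace (S st + m)%nat with (st + S m)%nat by lia.
    rewrite S_INR.
    replace ((INR st + 1 - INR q - / 2) * x)
      with ((INR st - INR q) * x + x / 2) by field.
    replace ((INR st - INR q - / 2) * x)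
      with ((INR st - INR q) * x - x / 2) by field.
    rewrite sin_plus, sin_minus. ring.
Qed.

Lemma sin_PI_div_Nmod_neq_0 q j :
  j <> 0%Z -> (Z.abs j <= 2 * Z.of_nat q)%Z -> sin (IZR j * PI / Nmod q) <> 0.
Proof.
  intros Hj0 Hj Hsin. assert (HN := Nmod_pos q). assert (HPI := PI_RGT_0).
  apply sin_eq_0_0 in Hsin as [k Hk].
  assert (Ejk : IZR j = IZR (k * (2 * Z.of_nat q + 1))).
  { rewrite mult_IZR, <- Nmod_IZR.
    apply (Rmult_eq_reg_r (PI / Nmod q)).
    - replace (IZR k * Nmod q * (PI / Nmod q)) with (IZR k * PI) by (field; lra).
      rewrite <- Hk. field. lra.
    - apply Rgt_not_eq, Rdiv_lt_0_compat; lra. }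
  apply eq_IZR in Ejk. subst j.
  assert (k <> 0%Z) by (intros ->; lia).
  destruct (Z.le_gt_cases 1 k);
    [rewrite Z.abs_eq in Hj by nia | rewrite Z.abs_neq in Hj by nia]; nia.
Qed.

Definition cos_char_sum (q : nat) (j : Z) : R :=
  lsum (zrange q) (fun k => cos (2 * PI * IZR k * IZR j / Nmod q)).

Lemma cos_char_sum_eq q j :
  (Z.abs j <= 2 * Z.of_nat q)%Z ->
  cos_char_sum q j = if Z.eq_dec j 0 then Nmod q else 0.
Proof.
  intros Hj. assert (HN := Nmod_pos q). unfold cos_char_sum.
  destruct (Z.eq_dec j 0) as [->|Hj0].
  { rewrite (lsum_ext _ _ (fun _ => 1)).
    - now rewrite lsum_const1, zrange_length.
    - intros k _. rewrite Rmult_0_r, Rdiv_0_l. apply cos_0. }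
  set (x := 2 * PI * IZR j / Nmod q).
  rewrite (lsum_ext _ _ (fun k => cos (IZR k * x)))
    by (intros; unfold x; f_equal; field; lra).
  assert (Hsin : sin (x / 2) <> 0).
  { replace (x / 2) with (IZR j * PI / Nmod q) by (unfold x; field; lra).
    now apply sin_PI_div_Nmod_neq_0. }
  apply (Rmult_eq_reg_l (2 * sin (x / 2))); [|lra].
  rewrite <- lsum_scal. unfold zrange. rewrite lsum_seq_cos_telescope.
  assert (0 <= INR q) by apply pos_INR.
  replace ((INR (0 + (2 * q + 1)) - INR q - / 2) * x) with (IZR j * PI)
    by (unfold x, Nmod; rewrite Nat.add_0_l, plus_INR, mult_INR; simpl; field; lra).
  replace ((INR 0 - INR q - / 2) * x) with (- (IZR j * PI))
    by (unfold x, Nmod; rewrite plus_INR, mult_INR; simpl; field; lra).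
  rewrite sin_neg, sin_eq_0_1 by (exists j; reflexivity). ring.
Qed.

Lemma cos_char_mul q k n m :
  cos (2 * PI * IZR k * IZR n / Nmod q) * cos (2 * PI * IZR k * IZR m / Nmod q)
  = / 2 * cos (2 * PI * IZR k * IZR (n + m) / Nmod q)
    + / 2 * cos (2 * PI * IZR k * IZR (n - m) / Nmod q).
Proof.
  assert (HN := Nmod_pos q). rewrite plus_IZR, minus_IZR.
  set (t := 2 * PI * IZR k / Nmod q).
  replace (2 * PI * IZR k * IZR n / Nmod q) with (t * IZR n) by (unfold t; field; lra).
  replace (2 * PI * IZR k * IZR m / Nmod q) with (t * IZR m) by (unfold t; field; lra).
  replace (2 * PI * IZR k * (IZR n + IZR m) / Nmod q) with (t * IZR n + t * IZR m)
    by (unfold t; field; lra).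
  replace (2 * PI * IZR k * (IZR n - IZR m) / Nmod q) with (t * IZR n - t * IZR m)
    by (unfold t; field; lra).
  rewrite cos_plus, cos_minus. field.
Qed.

Lemma sumZ_lsum q g : sumZ q g = lsum (zrange q) g.
Proof. reflexivity. Qed.

Lemma dft_re_0 q f : dft_re q f 0 = / sqrt (Nmod q) * lsum (zrange q) f.
Proof.
  unfold dft_re. rewrite sumZ_lsum. f_equal. apply lsum_ext. intros n _.
  rewrite Rmult_0_r, Rmult_0_l, Rdiv_0_l, cos_0. ring.
Qed.

Lemma lsum_dft_re_mul_cos q f m :
  lsum (zrange q) (fun k => dft_re q f k * cos (2 * PI * IZR k * IZR m / Nmod q))
  = / sqrt (Nmod q) * lsum (zrange q)
      (fun n => f n * (/ 2 * cos_char_sum q (n + m) + / 2 * cos_char_sum q (n - m))).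
Proof.
  unfold dft_re. rewrite <- lsum_scal.
  transitivity (lsum (zrange q) (fun k => / sqrt (Nmod q) * lsum (zrange q)
    (fun n => f n * (cos (2 * PI * IZR k * IZR n / Nmod q)
                     * cos (2 * PI * IZR k * IZR m / Nmod q))))).
  { apply lsum_ext. intros k _. rewrite sumZ_lsum, Rmult_assoc. f_equal.
    rewrite Rmult_comm, <- lsum_scal. apply lsum_ext. intros n _. ring. }
  rewrite lsum_scal, lsum_swap, lsum_scal. f_equal. apply lsum_ext. intros n _.
  unfold cos_char_sum. rewrite <- !lsum_scal, <- lsum_plus, <- !lsum_scal.
  apply lsum_ext. intros k _. now rewrite cos_char_mul.
Qed.

(* By orthogonality only n = m and n = -m survive; evenness makes them equal. *)
Lemma dft_re_inversion_even q f m :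
  (forall n, in_range q n -> f (- n)%Z = f n) -> in_range q m ->
  lsum (zrange q) (fun k => dft_re q f k * cos (2 * PI * IZR k * IZR m / Nmod q))
  = sqrt (Nmod q) * f m.
Proof.
  intros Heven Hm. assert (HN := Nmod_pos q).
  assert (HC : forall n, In n (zrange q) ->
    cos_char_sum q (n + m) = (if Z.eq_dec (n + m) 0 then Nmod q else 0) /\
    cos_char_sum q (n - m) = (if Z.eq_dec (n - m) 0 then Nmod q else 0)).
  { intros n Hn. apply In_zrange in Hn. unfold in_range in *.
    split; apply cos_char_sum_eq; lia. }
  rewrite lsum_dft_re_mul_cos.
  erewrite lsum_ext by (intros n Hn; destruct (HC n Hn) as [-> ->];
                        rewrite Rmult_plus_distr_l; reflexivity).
  rewrite lsum_plus, (lsum_delta _ (- m)%Z), (lsum_delta _ m).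
  - destruct (Z.eq_dec (- m + m) 0); [|lia].
    destruct (Z.eq_dec (m - m) 0); [|lia].
    rewrite Heven by assumption.
    rewrite <- (sqrt_sqrt (Nmod q)) at 2 3 by lra.
    assert (Hsq := sqrt_Nmod_pos q).
    field. lra.
  - apply NoDup_zrange.
  - now apply In_zrange.
  - intros x _ Hx. destruct (Z.eq_dec (x - m) 0); [lia|ring].
  - apply NoDup_zrange.
  - apply In_zrange. unfold in_range in *. lia.
  - intros x _ Hx. destruct (Z.eq_dec (x + m) 0); [lia|ring].
Qed.

Lemma Rabs_dft_re_le q f k :
  Rabs (dft_re q f k) <= / sqrt (Nmod q) * lsum (zrange q) (fun n => Rabs (f n)).
Proof.
  assert (Hr := Rinv_0_lt_compat _ (sqrt_Nmod_pos q)).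
  unfold dft_re. rewrite sumZ_lsum, Rabs_mult, (Rabs_right (/ _)) by lra.
  apply Rmult_le_compat_l; [lra|]. apply Rabs_lsum_mul_cos_le.
Qed.

Lemma Rabs_even_le_dft_re q f m :
  (forall n, in_range q n -> f (- n)%Z = f n) -> in_range q m ->
  Rabs (f m) <= / sqrt (Nmod q) * lsum (zrange q) (fun k => Rabs (dft_re q f k)).
Proof.
  intros Heven Hm. assert (Hsq := sqrt_Nmod_pos q).
  replace (f m) with (/ sqrt (Nmod q) * lsum (zrange q)
    (fun k => dft_re q f k * cos (2 * PI * IZR k * IZR m / Nmod q))).
  2:{ rewrite dft_re_inversion_even by assumption. field. lra. }
  rewrite Rabs_mult, (Rabs_right (/ _))
    by (apply Rle_ge, Rlt_le, Rinv_0_lt_compat; lra).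
  apply Rmult_le_compat_l; [apply Rlt_le, Rinv_0_lt_compat; lra|].
  apply Rabs_lsum_mul_cos_le.
Qed.

Lemma lsum_dft_re_even q f :
  (forall n, in_range q n -> f (- n)%Z = f n) ->
  lsum (zrange q) (dft_re q f) = sqrt (Nmod q) * f 0%Z.
Proof.
  intros Heven. rewrite <- dft_re_inversion_even by (auto; unfold in_range; lia).
  apply lsum_ext. intros k _. rewrite Rmult_0_r, Rdiv_0_l, cos_0. ring.
Qed.

Lemma le_four_mul_of_cross_bounds (N x y a b : R) :
  0 < N -> 0 < x -> 0 <= a -> 0 <= b ->
  x <= 2 * a * (/ sqrt N * y) -> y <= 2 * b * (/ sqrt N * x) -> N <= 4 * a * b.
Proof.
  intros HN Hx Ha Hb Hxy Hyx.
  assert (Hsq : 0 < sqrt N) by now apply sqrt_lt_R0.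
  assert (Hsqsq : sqrt N * sqrt N = N) by (apply sqrt_sqrt; lra).
  set (r := / sqrt N) in *.
  assert (Hr : 0 < r) by (apply Rinv_0_lt_compat; lra).
  assert (Hr2 : r * r * N = 1) by (rewrite <- Hsqsq; unfold r; field; lra).
  assert (Hchain : x <= 4 * a * b * (r * r) * x).
  { assert (0 <= 2 * a * r) by nra. nra. }
  assert (1 <= 4 * a * b * (r * r)) by (apply (Rmult_le_reg_r x); lra).
  nra.
Qed.

Theorem mainTheorem15 (s : R) (q : nat) (f : Z -> R) :
  (s = 1 \/ s = -1) ->
  (1 <= q)%nat ->
  (exists n, in_range q n /\ f n <> 0) ->
  (forall n, in_range q n -> f (- n)%Z = f n) ->
  s * f 0%Z <= 0 ->
  dft_re q f 0%Z <= 0 ->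
  INR (count_neg q f * count_neg q (fun k => s * dft_re q f k)) >= INR (2 * q + 1) / 16.
Proof.
  intros Hs _ [n0 [Hn0 Hfn0]] Heven Hsf0 HF0.
  assert (Hsq := sqrt_Nmod_pos q).
  set (F := dft_re q f) in *.
  set (a := count_neg q f). set (b := count_neg q (fun k => s * F k)).
  set (Sf := lsum (zrange q) (fun n => Rabs (f n))).
  set (SF := lsum (zrange q) (fun k => Rabs (F k))).
  assert (HsF : forall k, Rabs (s * F k) = Rabs (F k))
    by (intros k; rewrite Rabs_mult, <- (Rmult_1_l (Rabs (F k))) at 1; f_equal;
        destruct Hs as [-> | ->]; unfold Rabs; destruct Rcase_abs; lra).
  assert (Hf_l1 : Sf <= 2 * INR a * (/ sqrt (Nmod q) * SF)).
  { apply lsum_Rabs_le_count_negl.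
    - unfold F in HF0. rewrite dft_re_0 in HF0.
      apply (Rmult_le_reg_l (/ sqrt (Nmod q))); [apply Rinv_0_lt_compat; lra|lra].
    - intros m Hm. apply Rabs_even_le_dft_re, In_zrange; assumption. }
  assert (HF_l1 : SF <= 2 * INR b * (/ sqrt (Nmod q) * Sf)).
  { unfold SF. rewrite (lsum_ext _ _ (fun k => Rabs (s * F k))) by auto.
    apply lsum_Rabs_le_count_negl.
    - rewrite lsum_scal. unfold F. rewrite lsum_dft_re_even by assumption. nra.
    - intros k _. rewrite HsF. apply Rabs_dft_re_le. }
  assert (HSf : 0 < Sf).
  { apply (Rlt_le_trans _ (Rabs (f n0))); [now apply Rabs_pos_lt|].
    apply (le_lsum_of_In _ _ (fun n => Rabs (f n))); [now apply In_zrange|].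
    intros; apply Rabs_pos. }
  assert (HN := Nmod_pos q). assert (Ha := pos_INR a). assert (Hb := pos_INR b).
  assert (Nmod q <= 4 * INR a * INR b)
    by (apply le_four_mul_of_cross_bounds with Sf SF; assumption).
  rewrite mult_INR. fold (Nmod q). lra.
Qed.
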